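(* Let $F$ be an infinite field of characteristic $3$, let $A_1$ be the $F$-vector space of linear forms in variables $x_1,\dots,x_m$, and let $U\subseteq A_1$ be a subspace with $\dim U=n$. Suppose $a_1<a_2<\dots<a_n$ are integers with $\mathrm{ms}_i(U)\ge a_i$ for all $1\le i\le n$. Then for each $0\le k\le n$ there exists a subspace $U_k\subseteq U$ with $\dim U_k=k$ such that $\mathrm{ms}_i(U_k)\ge a_{n-k+i}$ for all $1\le i\le k$.
   Context: For a linear form $u=\sum_i c_ix_i$, $\mathrm{supp}(u)=\{x_i:c_i\ne 0\}$. For a subspace $V$ of linear forms, $\mathrm{supp}(V)=\bigcup_{v\in V}\mathrm{supp}(v)$. For a subspace $U$ and $1\le i\le\dim U$, the minimum support function is $\mathrm{ms}_i(U)=\min\{|\mathrm{supp}(V)|: V\subseteq U \text{ a subspace}, \dim V=i\}$. *)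

From HB Require Import structures.
From mathcomp Require Import all_boot all_order all_algebra.
From mathcomp Require Import boolp.
Set Implicit Arguments. Unset Strict Implicit. Unset Printing Implicit Defensive.
Import GRing.Theory.
Local Open Scope ring_scope.

(* Linear forms in x_1..x_m over F are coefficient row vectors 'rV[F]_m:
   u = \sum_j u 0 j * x_(j+1). *)

Definition infinite_type (T : eqType) : Prop := forall s : seq T, exists x, x \notin s.

Definition supp_form (F : fieldType) (m : nat) (u : 'rV[F]_m) : {set 'I_m} :=
  [set j | u 0 j != 0].

Definition supp_space (F : fieldType) (m : nat) (V : {vspace 'rV[F]_m}) : {set 'I_m} :=
  [set j | `[< exists v, v \in V /\ j \in supp_form v >]].

(* ms_i(U) = min { |supp V| : V subspace of U, dim V = i } (0 if no such V). *)
Definition ms_pred (F : fieldType) (m : nat) (i : nat) (U : {vspace 'rV[F]_m}) : pred nat :=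
  fun s => `[< exists V : {vspace 'rV[F]_m}, (V <= U)%VS /\ \dim V = i /\ #|supp_space V| = s >].

Definition ms (F : fieldType) (m : nat) (i : nat) (U : {vspace 'rV[F]_m}) : nat :=
  match pselect (exists s, ms_pred i U s) with
  | left h => ex_minn h
  | right _ => 0%N
  end.

From HB Require Import structures.
From mathcomp Require Import all_boot all_order all_algebra.
From mathcomp Require Import boolp zify.
Import GRing.Theory Order.TTheory.
Local Open Scope ring_scope.
Set Implicit Arguments. Unset Strict Implicit. Unset Printing Implicit Defensive.

(* Pick U_k inside U in general position with respect to the finitely many
   subspaces W_T = U ∩ <x_j : j ∈ T>, i.e. dim (W_T + U_k) = min(n, dim W_T + k)
   for every set of variables T; this is possible because over an infinite
   field no subspace is a finite union of proper subspaces.  If V ⊆ U_k has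
   dimension i ≥ 1 and support T, then V ⊆ W_T ∩ U_k, so the general position
   forces dim W_T ≥ n - k + i, whence
   |T| ≥ |supp W_T| ≥ ms_(dim W_T)(U) ≥ a_(dim W_T) ≥ a_(n-k+i). *)

Section GeneralPosition.
Variables (F : fieldType) (vT : vectType F).
Implicit Types (U V W X : {vspace vT}) (v x y : vT).

Lemma subv_dim_exists U j : (j <= \dim U)%N -> exists2 V, (V <= U)%VS & \dim V = j.
Proof.
move=> jU; exists <<take j (vbasis U)>>%VS.
  by apply/span_subvP => v /mem_take; exact: vbasis_mem.
have /eqP -> : free (take j (vbasis U)).
  apply: (@catl_free _ _ (drop j (vbasis U))).
  by rewrite cat_take_drop (basis_free (vbasisP U)).
by rewrite size_takel // size_tuple.
Qed.

Lemma dimv_addv_line X v : v \notin X -> \dim (X + <[v]>) = (\dim X).+1.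
Proof.
move=> vX; have v0 : v != 0 by apply: contraNneq vX => ->; exact: mem0v.
rewrite dimv_disjoint_sum ?dim_vline ?v0 ?addn1 //.
apply/eqP; rewrite -subv0; apply/subvP => w /memv_capP [wX /vlineP [c wE]].
rewrite memv0 wE scaler_eq0 orbC; apply: contraTT wX => /norP [_ c0].
by rewrite wE rpredZeq negb_or c0.
Qed.

Lemma dimv_addv_generic U X v : (X <= U)%VS -> v \in U ->
  (U <= X)%VS || (v \notin X) -> \dim (X + <[v]>) = minn (\dim U) (\dim X).+1.
Proof.
move=> XU vU /orP [UX | vX].
  have /eqP XE : X == U by rewrite eqEdim XU dimvS.
  by rewrite XE (addv_idPl _) -?memvE //; lia.
rewrite dimv_addv_line //; suff : (\dim X < \dim U)%N by lia.
rewrite ltn_neqAle dimvS // andbT; apply: contraNneq vX => dXU.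
by have /eqP -> : X == U by rewrite eqEdim XU dXU leqnn.
Qed.

Lemma memv_affine_line2 W x y s t : s != t ->
  y + s *: x \in W -> y + t *: x \in W -> (x \in W) && (y \in W).
Proof.
move=> st ysW ytW.
have xW : x \in W.
  have : (s - t) *: x \in W.
    have -> : (s - t) *: x = (y + s *: x) - (y + t *: x).
      by rewrite scalerBl opprD addrACA subrr add0r.
    exact: memvB.
  by rewrite rpredZeq subr_eq0 (negbTE st).
by rewrite xW -(addrK (t *: x) y) memvB ?memvZ.
Qed.

Lemma dimv_cap_generic U W X :
  \dim (W + X) = minn (\dim U) (\dim W + \dim X) -> (0 < \dim (W :&: X))%N ->
  (\dim U - \dim X + \dim (W :&: X) <= \dim W)%N.
Proof. by have := dimv_sum_cap W X; have := dimvS (capvSl W X); lia. Qed.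

Hypothesis infF : infinite_type F.

Lemma avoid_subspaces U (Ws : seq {vspace vT}) :
  (forall W, W \in Ws -> ~~ (U <= W)%VS) ->
  exists2 v, v \in U & forall W, W \in Ws -> v \notin W.
Proof.
elim: Ws => [|W1 Ws IH] UWs; first by exists 0; rewrite ?mem0v.
have [y yU yWs] : exists2 y, y \in U & forall W, W \in Ws -> y \notin W.
  by apply: IH => W WWs; apply: UWs; rewrite inE WWs orbT.
have [x xU xW1] := subvPn (UWs W1 (mem_head _ _)).
(* Each W meets the line y + F x in at most one point, at parameter [bad W]. *)
pose bad W : F := if pselect (exists t, y + t *: x \in W) is left ex then xchoose ex else 0.
have [t t_good] := infF (map bad (W1 :: Ws)).
have badP W : y + t *: x \in W -> y + bad W *: x \in W.
  move=> ytW; rewrite /bad; case: pselect => [ex | nex]; first exact: (xchooseP ex).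
  by case: nex; exists t.
exists (y + t *: x) => [|W WWs]; first by rewrite memvD ?memvZ.
apply/negP => ytW.
have badWt : bad W != t by apply: contraNneq t_good => <-; exact: map_f.
have /andP [xW yW] := memv_affine_line2 badWt (badP W ytW) ytW.
move: WWs; rewrite inE => /predU1P [WE | WWs]; first by rewrite -WE xW in xW1.
by have := yWs W WWs; rewrite yW.
Qed.

Lemma generic_subspace U (I : finType) (W : I -> {vspace vT}) :
  (forall i, W i <= U)%VS -> forall j, (j <= \dim U)%N ->
  exists Uj : {vspace vT}, [/\ (Uj <= U)%VS, \dim Uj = j &
    forall i, \dim (W i + Uj) = minn (\dim U) (\dim (W i) + \dim Uj)].
Proof.
move=> WU; elim=> [|j IH] jU.
  exists 0%VS; split=> [||i]; rewrite ?sub0v ?dimv0 // addv0 addn0.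
  by have := dimvS (WU i); lia.
have [Uj [UjU dUj WUj]] := IH (ltnW jU).
pose Xs := Uj :: [seq (W i + Uj)%VS | i <- enum I].
have [X | v vU vXs] := @avoid_subspaces U [seq X <- Xs | ~~ (U <= X)%VS].
  by rewrite mem_filter => /andP [].
have v_generic X : X \in Xs -> (U <= X)%VS || (v \notin X).
  by move=> XXs; case: (boolP (U <= X)%VS) => //= nUX; rewrite vXs // mem_filter nUX.
have dUjv : \dim (Uj + <[v]>) = j.+1.
  by rewrite (dimv_addv_generic UjU) ?v_generic ?mem_head //; lia.
exists (Uj + <[v]>)%VS; split=> // [|i]; first by rewrite subv_add UjU -memvE.
rewrite addvA (@dimv_addv_generic U) ?WUj ?subv_add ?WU ?v_generic //; first lia.
by rewrite inE (map_f (fun i => W i + Uj)%VS) ?mem_enum ?orbT.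
Qed.
End GeneralPosition.

Section Support.
Variables (F : fieldType) (m : nat).
Implicit Types (T : {set 'I_m}) (U V W : {vspace 'rV[F]_m}).

Definition supported_on T : {vspace 'rV[F]_m} :=
  lker (linfun (mulmxr (diag_mx (\row_j (if j \in T then 0 else 1))))).

Lemma supported_onP (v : 'rV[F]_m) T :
  reflect (forall j, j \notin T -> v 0 j = 0) (v \in supported_on T).
Proof.
rewrite memv_ker lfunE /= mul_mx_diag; apply: (iffP eqP) => [vT0 j jT | vT0].
  by have := congr1 (fun M : 'rV_m => M 0 j) vT0; rewrite !mxE (negbTE jT) mulr1.
by apply/rowP => j; rewrite !mxE; case: ifPn => jT; rewrite ?mulr0 ?vT0 ?mulr1.
Qed.

Lemma supp_space_subset V T : (V <= supported_on T)%VS -> supp_space V \subset T.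
Proof.
move/subvP=> VT; apply/subsetP => j; rewrite inE => /asboolP [v [vV]].
rewrite inE; apply: contraNT => jT.
by move/supported_onP: (VT v vV) => /(_ j jT) ->.
Qed.

Lemma subv_supported_on_supp V : (V <= supported_on (supp_space V))%VS.
Proof.
apply/subvP => v vV; apply/supported_onP => j; rewrite inE; apply: contraNeq => vj0.
by apply/asboolP; exists v; rewrite inE.
Qed.

Lemma ms_le_card_supp U W : (W <= U)%VS -> (ms (\dim W) U <= #|supp_space W|)%N.
Proof.
move=> WU; rewrite /ms; case: pselect => [ex | nex].
  by case: ex_minnP => s _; apply; apply/asboolP; exists W.
by case: nex; exists #|supp_space W|; apply/asboolP; exists W.
Qed.

Lemma ms_attained i U : (i <= \dim U)%N ->
  exists V, [/\ (V <= U)%VS, \dim V = i & #|supp_space V| = ms i U].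
Proof.
move=> iU; rewrite /ms; case: pselect => [ex | nex].
  by case: ex_minnP => s /asboolP [V [VU [dV <-]]] _; exists V.
have [V VU dV] := subv_dim_exists iU.
by case: nex; exists #|supp_space V|; apply/asboolP; exists V.
Qed.
End Support.

Theorem lemma6 (F : fieldType) (hinf : infinite_type F) (hchar : (3 \in [pchar F])%N)
  (m : nat) (U : {vspace 'rV[F]_m}) (n : nat) (hdim : \dim U = n)
  (a : nat -> int)
  (hinc : forall i : nat, (1 <= i)%N -> (i < n)%N -> a i < a i.+1)
  (hms : forall i : nat, (1 <= i <= n)%N -> a i <= (ms i U)%:Z) :
  forall k : nat, (k <= n)%N ->
    exists Uk : {vspace 'rV[F]_m},
      (Uk <= U)%VS /\ \dim Uk = k /\
      (forall i : nat, (1 <= i <= k)%N -> a (n - k + i)%N <= (ms i Uk)%:Z).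
Proof.
have a_mono : {in [pred i | 1 <= i <= n]%N &, {mono a : i j / (i <= j)%N >-> i <= j}}.
  apply: Order.NatMonotonyTheory.incn_inP => [i j + + k | i]; rewrite !inE.
    move=> /andP [? ?] /andP [? ?] /andP [? ?]; lia.
  move=> /andP [? ?] /andP [? ?]; exact: hinc.
move=> k kn; pose W T := (U :&: supported_on F T)%VS.
have kU : (k <= \dim U)%N by rewrite hdim.
have [Uk [UkU dUk Uk_generic]] :=
  generic_subspace hinf (fun T => capvSl U (supported_on F T)) kU.
exists Uk; split => //; split => // i /andP [i1 ik].
have iUk : (i <= \dim Uk)%N by rewrite dUk.
have [V [VUk dV <-]] := ms_attained iUk.
set T := supp_space V.
have VWUk : (V <= W T :&: Uk)%VS.
  by rewrite !subv_cap VUk (subv_trans VUk UkU) subv_supported_on_supp.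
have dimW : (n - k + i <= \dim (W T))%N.
  have := dimv_cap_generic (Uk_generic T); have := dimvS VWUk; rewrite /W; lia.
have dimWn : (\dim (W T) <= n)%N by rewrite -hdim dimvS ?capvSl.
apply: (@le_trans _ _ (a (\dim (W T)))); first by rewrite a_mono ?inE; lia.
apply: le_trans (hms _ _) _; first lia.
rewrite lez_nat (leq_trans (ms_le_card_supp (capvSl _ _))) //.
by rewrite subset_leq_card // supp_space_subset // capvSr.
Qed.
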